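(* Let $(M,\Gamma,\le)$ be a $po$-$\Gamma$-groupoid and let $f$ be a fuzzy subset of $M$. Then $f$ is a fuzzy right ideal of $M$ if and only if (1) $f\circ 1\preceq f$ and (2) for all $x,y\in M$, if $x\le y$ then $f(x)\ge f(y)$.
   Context: Let $M$ and $\Gamma$ be nonempty sets with a map $M\times\Gamma\times M\to M$, $(a,\gamma,b)\mapsto a\gamma b$. A $po$-$\Gamma$-groupoid is such an $M$ with a partial order $\le$ on $M$ such that $a\le b$ implies $a\gamma c\le b\gamma c$ and $c\gamma a\le c\gamma b$ for all $c\in M$, $\gamma\in\Gamma$. A fuzzy subset of $M$ is a map $M\to[0,1]$. For $a\in M$ let $A_a=\{(y,z)\in M\times M : a\le y\gamma z \text{ for some } \gamma\in\Gamma\}$. For fuzzy subsets $f,g$, define $(f\circ g)(a)=\bigvee_{(y,z)\in A_a}\min\{f(y),g(z)\}$ if $A_a\neq\emptyset$ and $(f\circ g)(a)=0$ if $A_a=\emptyset$. $f\preceq g$ means $f(a)\le g(a)$ for all $a\in M$. $1$ denotes the fuzzy subset with $1(x)=1$ for all $x\in M$. A fuzzy right ideal of $M$ is a fuzzy subset $f$ with $f(x\gamma y)\ge f(x)$ for all $x,y\in M$, $\gamma\in\Gamma$, and such that $x\le y$ implies $f(x)\ge f(y)$. *)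

From HB Require Import structures.
From mathcomp Require Import all_boot all_order all_algebra.
From mathcomp Require Import boolp classical_sets reals.
Set Implicit Arguments. Unset Strict Implicit. Unset Printing Implicit Defensive.
Import Order.TTheory GRing.Theory Num.Theory.
Local Open Scope ring_scope.
Local Open Scope classical_set_scope.

Definition po_Gamma_groupoid (M G : Type) (op : M -> G -> M -> M)
    (le : M -> M -> Prop) : Prop :=
  inhabited M /\ inhabited G /\
  (forall a, le a a) /\
  (forall a b, le a b -> le b a -> a = b) /\
  (forall a b c, le a b -> le b c -> le a c) /\
  (forall a b c g, le a b -> le (op a g c) (op b g c) /\ le (op c g a) (op c g b)).

Definition fuzzy_subset (R : realType) (M : Type) (f : M -> R) : Prop :=
  forall x, 0 <= f x <= 1.

Definition A_set (M G : Type) (op : M -> G -> M -> M) (le : M -> M -> Prop)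
    (a : M) : set (M * M) :=
  [set p | exists g : G, le a (op p.1 g p.2)].

Definition fcomp (R : realType) (M G : Type) (op : M -> G -> M -> M)
    (le : M -> M -> Prop) (f g : M -> R) (a : M) : R :=
  if `[< A_set op le a !=set0 >] then
    sup [set Num.min (f p.1) (g p.2) | p in A_set op le a]
  else 0.

Definition fle (R : realType) (M : Type) (f g : M -> R) : Prop :=
  forall a, f a <= g a.

Definition fone (R : realType) (M : Type) : M -> R := fun _ => 1.

Definition fuzzy_right_ideal (R : realType) (M G : Type)
    (op : M -> G -> M -> M) (le : M -> M -> Prop) (f : M -> R) : Prop :=
  (forall x y g, f x <= f (op x g y)) /\
  (forall x y, le x y -> f y <= f x).

From HB Require Import structures.
From mathcomp Require Import all_boot all_order all_algebra.
From mathcomp Require Import boolp classical_sets reals.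
Import Order.TTheory GRing.Theory Num.Theory.
Local Open Scope ring_scope.
Local Open Scope classical_set_scope.

(* Since [f <= 1], [(f o 1)(a)] is the supremum of the [f y] over [(y, z)]
   in [A_a]. Right ideals bound every such [f y] by [f a] (as [a <= y g z]),
   and conversely [(x, y)] lies in [A_(x g y)] by reflexivity. *)

Section FuzzyCompositionWithOne.

Variables (R : realType) (M G : Type) (op : M -> G -> M -> M).
Variables (le : M -> M -> Prop) (f : M -> R).
Hypothesis f_le1 : forall x, f x <= 1.

Lemma min_fone (p : M * M) : Num.min (f p.1) (fone R p.2) = f p.1.
Proof. exact/min_idPl/f_le1. Qed.

Lemma fcomp_fone_le (a : M) :
  0 <= f a -> (forall p, A_set op le a p -> f p.1 <= f a) ->
  fcomp op le f (@fone R M) a <= f a.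
Proof.
move=> f_ge0 bound_f; rewrite /fcomp; case: ifPn => [/asboolP [p Ap]|//].
apply: ge_sup; first by exists (Num.min (f p.1) (fone R p.2)), p.
by move=> _ [q Aq <-]; rewrite min_fone; exact: bound_f.
Qed.

Hypothesis le_refl : forall a, le a a.

Lemma fcomp_fone_ge (x y : M) (g : G) :
  f x <= fcomp op le f (@fone R M) (op x g y).
Proof.
have Axy : A_set op le (op x g y) (x, y) by exists g.
rewrite /fcomp; case: ifPn => [_|/asboolPn []]; last by exists (x, y).
rewrite -(min_fone (x, y)); apply: sup_upper_bound; last by exists (x, y).
split; first by exists (Num.min (f x) (fone R y)), (x, y).
by exists 1 => _ [p _ <-]; rewrite ge_min lexx orbT.
Qed.

End FuzzyCompositionWithOne.

Theorem proposition4 (R : realType) (M G : Type) (op : M -> G -> M -> M)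
    (le : M -> M -> Prop) (f : M -> R) :
  po_Gamma_groupoid op le -> fuzzy_subset f ->
  (fuzzy_right_ideal op le f <->
   (fle (fcomp op le f (@fone R M)) f /\ (forall x y, le x y -> f y <= f x))).
Proof.
move=> [_ [_ [le_refl _]]] f_unit.
have f_ge0 x : 0 <= f x by case/andP: (f_unit x).
have f_le1 x : f x <= 1 by case/andP: (f_unit x).
split=> [[f_right f_anti] | [f_comp f_anti]]; split=> //.
- move=> a; apply: fcomp_fone_le => // p [g a_le].
  exact: le_trans (f_right p.1 p.2 g) (f_anti _ _ a_le).
- move=> x y g; apply: le_trans (f_comp (op x g y)).
  exact: fcomp_fone_ge.
Qed.
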